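(* Under the setup below, fix $K=(k_1,\dots,k_r)$. Let $C_K(y)$ be the matrix with rows indexed by multi-indices $\beta\in\mathbb N^r$ of degree $1$ and columns indexed by pairs $(\gamma,L)$, where $\gamma\in\mathbb N^r$ has degree $r-1$ and $L$ ranges over ordered $r$-tuples of distinct elements of $[d]$, with entries $C_K(y)_{\beta,(\gamma,L)}=D_{\beta+\gamma,L}(y)$. Then all $2\times2$ minors of $C_K(y)$ are homogeneous polynomials of degree $2r$ vanishing on the attention variety.
   Context: Setup: $d'=1$, $t>1$, $Q,K\in\mathbb R^{a\times d}$, $V\in\mathbb R^{1\times d}$ with row $v$, $A=K^\top Q$, $\varphi_W(X)=VX(X^\top AX)$, $X=(x_{kn})\in\mathbb R^{d\times t}$; fix $j\in[t]$, $n\ne j$, and $2\le r\le\min(a,d)$; $k_1,\dots,k_r$ are distinct elements of $[d]$. $y_{n,j}(\mathcal A,b)$ denotes the coefficient of $(\prod_{u\in\mathcal A}x_{un})x_{bj}$ in $\varphi_W(X)[1,j]$ divided by the number of distinct orderings of the size-2 multiset $\mathcal A$; $\omega(u,w)=1$ if $u=w$, $2$ otherwise. For $\alpha\in\mathbb N^r$ with $|\alpha|=r$, choose $f:[r]\to[r]$ with $|f^{-1}(m)|=\alpha_m$ whose only directed cycles are fixed points, and for a tuple $L=(l_1,\dots,l_r)$ of distinct indices set $D_{\alpha,L}(y)=\det\big(\omega(k_{f(p)},k_p)\,y_{n,j}(\{k_{f(p)},k_p\},l_q)\big)_{p,q=1}^r$; on $\mu(W)$ this equals $(\prod_m v_{k_m}^{\alpha_m})\det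 A_{K,L}$. $\mu$ maps $W$ to all scaled coefficients; the attention variety is the Zariski closure of $\operatorname{im}\mu$. *)

From HB Require Import structures.
From mathcomp Require Import all_boot all_order all_algebra.
From mathcomp Require Import mpoly.
Set Implicit Arguments. Unset Strict Implicit. Unset Printing Implicit Defensive.
Import Order.TTheory GRing.Theory Num.Theory.
Local Open Scope ring_scope.

(* Polynomial ring in the entries x_{kn} of X in R^{d x t}; the variable
   x_{kn} is 'X_(mxvec_index k n). *)
Definition Xvar (d t : nat) (k : 'I_d) (n : 'I_t) : 'I_(d * t) := mxvec_index k n.

Definition Xmat (R : comRingType) (d t : nat) : 'M[{mpoly R[d * t]}]_(d, t) :=
  \matrix_(k, n) 'X_(Xvar k n).

Definition attA (R : comRingType) (a d : nat) (Q K : 'M[R]_(a, d)) : 'M[R]_d :=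
  K^T *m Q.

(* phi_W(X) = V X (X^T A X), with d' = 1, as a 1 x t matrix of polynomials in X *)
Definition phiW (R : comRingType) (a d t : nat) (Q K : 'M[R]_(a, d)) (V : 'M[R]_(1, d))
  : 'M[{mpoly R[d * t]}]_(1, t) :=
  (map_mx (fun c => c%:MP) V *m Xmat R d t) *m
  ((Xmat R d t)^T *m map_mx (fun c => c%:MP) (attA Q K) *m Xmat R d t).

(* omega(u,w) = 1 if u = w, 2 otherwise; this is also the number of distinct
   orderings of the size-2 multiset {u,w}. *)
Definition omega (d : nat) (u w : 'I_d) : nat := if u == w then 1%N else 2%N.

Definition mon3 (d t : nat) (n j : 'I_t) (u w b : 'I_d) : 'X_{1..(d * t)} :=
  (U_(Xvar u n) + U_(Xvar w n) + U_(Xvar b j))%MM.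

(* y_{n,j}({u,w}, b) evaluated at mu(W): coefficient of the monomial divided by
   the number of distinct orderings of the multiset {u,w}. *)
Definition yval (R : fieldType) (a d t : nat) (n j : 'I_t)
  (Q K : 'M[R]_(a, d)) (V : 'M[R]_(1, d)) (u w b : 'I_d) : R :=
  (phiW t Q K V 0 j)@_(mon3 n j u w b) / (omega u w)%:R.

(* Coordinate ring of the y_{n,j}-coordinates: one variable for each pair
   (multiset {u,w}, b); the multiset {u,w} is encoded by (min, max).
   Variables with u > w are never used. *)
Definition yvar (d : nat) (u w b : 'I_d) : 'I_(d * d * d) :=
  if (u <= w)%N then mxvec_index (mxvec_index u w) b
  else mxvec_index (mxvec_index w u) b.

(* The point of the y-coordinate space given by mu(W): the variable with index
   yvar u w b (u <= w) gets the value yval u w b. *)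
Definition ypoint (R : fieldType) (a d t : nat) (n j : 'I_t)
  (Q K : 'M[R]_(a, d)) (V : 'M[R]_(1, d)) : 'I_(d * d * d) -> R :=
  fun i => mxvec (\matrix_(uw < d * d, b < d)
                    (mxvec (\matrix_(u < d, w < d) yval n j Q K V u w b)) 0 uw) 0 i.

Definition mdegree (r : nat) (al : {ffun 'I_r -> nat}) : nat := (\sum_(m < r) al m)%N.

Definition maddn (r : nat) (al be : {ffun 'I_r -> nat}) : {ffun 'I_r -> nat} :=
  [ffun m => (al m + be m)%N].

Definition admissible_f (r : nat) (al : {ffun 'I_r -> nat}) (f : 'I_r -> 'I_r) : Prop :=
  (forall m : 'I_r, #|[pred p | f p == m]| = al m) /\
  (forall (p : 'I_r) (k : nat), (0 < k)%N -> iter k f p = p -> f p = p).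

Definition Dpoly (R : comRingType) (d r : nat) (k : 'I_r -> 'I_d) (f : 'I_r -> 'I_r)
  (L : 'I_r -> 'I_d) : {mpoly R[d * d * d]} :=
  \det (\matrix_(p < r, q < r)
          ((omega (k (f p)) (k p))%:R *: 'X_(yvar (k (f p)) (k p) (L q)))).

(* Entry C_K(y)_{beta,(gamma,L)} = D_{beta+gamma,L}(y), where fch alpha is the
   chosen f for alpha. *)
Definition CKentry (R : comRingType) (d r : nat) (k : 'I_r -> 'I_d)
  (fch : {ffun 'I_r -> nat} -> 'I_r -> 'I_r)
  (be ga : {ffun 'I_r -> nat}) (L : {ffun 'I_r -> 'I_d}) : {mpoly R[d * d * d]} :=
  Dpoly R (k) (fch (maddn be ga)) L.

From HB Require Import structures.
From mathcomp Require Import all_boot all_order all_algebra all_fingroup.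
From mathcomp Require Import mpoly ring.
Set Implicit Arguments. Unset Strict Implicit. Unset Printing Implicit Defensive.
Import GRing.Theory Num.Theory.
Local Open Scope ring_scope.

(* On mu(W), omega(u, w) y_{n,j}({u, w}, b) is the coefficient of
   x_{un} x_{wn} x_{bj} in phi_W(X)[1, j], namely v_u A_{wb} + v_w A_{ub}
   (only v_u A_{ub} when u = w).  Hence the matrix defining D_{alpha,L} is
   T A_{K,L}, where row p of T has v_{k_{f(p)}} on the diagonal and v_{k_p}
   in column f(p) (when f(p) <> p).  Since the only cycles of f are fixed
   points, the identity is the only permutation supported by T, so
   D_{alpha,L}(mu(W)) = v^alpha det A_{K,L}.  With alpha = beta + gamma the
   matrix C_K(mu(W)) is the rank-one matrix v^beta (v^gamma det A_{K,L}),
   so its 2 x 2 minors vanish; homogeneity is clear since every D_{alpha,L}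
   is an r x r determinant in scalar multiples of variables. *)

Lemma Xvar_eq d t (k k' : 'I_d) (s s' : 'I_t) :
  (Xvar k s == Xvar k' s') = (k == k') && (s == s').
Proof.
apply/eqP/andP => [/cast_ord_inj/enum_rank_inj[-> ->] //|[/eqP-> /eqP->] //].
Qed.

Lemma mon3_eq d t (n j s : 'I_t) (u w b c p q : 'I_d) : n != j ->
  ((U_(Xvar c s) + U_(Xvar p s) + U_(Xvar q j))%MM == mon3 n j u w b)
  = [&& s == n, q == b & ((c == u) && (p == w)) || ((c == w) && (p == u))].
Proof.
move=> nj; apply/idP/idP; last first.
  case/and3P=> /eqP-> /eqP-> /orP[/andP[/eqP-> /eqP->]|/andP[/eqP-> /eqP->]] //.
  by rewrite /mon3 (addmC U_(Xvar w n)%MM).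
move=> /eqP/mnmP E.
move: nj (E (Xvar u n)) (E (Xvar w n)) (E (Xvar c n)) (E (Xvar b j)).
rewrite /mon3 !mnmDE !mnm1E !Xvar_eq.
by repeat (case: eqP => [?|?]; try subst) => //=.
Qed.

Lemma mcoeff_phiW (R : comRingType) a d t (Q K : 'M[R]_(a, d)) V (j : 'I_t)
    (m : 'X_{1..d * t}) :
  (phiW t Q K V 0 j)@_m = \sum_(s < t) \sum_(c < d) \sum_(q < d) \sum_(p < d)
    V 0 c * attA Q K p q * ((U_(Xvar c s) + U_(Xvar p s) + U_(Xvar q j))%MM == m)%:R.
Proof.
rewrite /phiW mxE raddf_sum; apply: eq_bigr => s _; rewrite !mxE big_distrl raddf_sum.
apply: eq_bigr => c _; rewrite !mxE big_distrr raddf_sum; apply: eq_bigr => q _.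
rewrite !mxE big_distrl big_distrr raddf_sum; apply: eq_bigr => p _ /=.
rewrite /Xmat !mxE -mcoeffX -mcoeffCM mpolyCM !mpolyXD; congr (_@_m); ring.
Qed.

Lemma sum_if_eq_and (R : nmodType) (I : finType) (i0 : I) (P : bool) (F : I -> R) :
  \sum_i (if (i == i0) && P then F i else 0) = if P then F i0 else 0.
Proof.
case: P; last by rewrite big1 // => i _; rewrite andbF.
by under eq_bigr => i _ do rewrite andbT; rewrite -big_mkcond big_pred1_eq.
Qed.

Lemma mcoeff_phiW_mon3 (R : comRingType) a d t (Q K : 'M[R]_(a, d)) V
    (n j : 'I_t) (u w b : 'I_d) : n != j ->
  (phiW t Q K V 0 j)@_(mon3 n j u w b) =
  if u == w then V 0 u * attA Q K u b
  else V 0 u * attA Q K w b + V 0 w * attA Q K u b.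
Proof.
(* Sum over s and q innermost: they are pinned to n and b. *)
move=> nj; rewrite mcoeff_phiW exchange_big /=.
under eq_bigr => c _ do rewrite exchange_big /=.
under eq_bigr => c _ do under eq_bigr => q _ do rewrite exchange_big /=.
under eq_bigr => c _ do under eq_bigr => q _ do under eq_bigr => p _ do
  under eq_bigr => s _ do rewrite mon3_eq // mulr_natr mulrb.
under eq_bigr => c _ do under eq_bigr => q _ do under eq_bigr => p _ do
  rewrite sum_if_eq_and.
under eq_bigr => c _ do rewrite exchange_big /=.
under eq_bigr => c _ do under eq_bigr => p _ do rewrite sum_if_eq_and.
case: (eqVneq u w) => [<-|uw].
  under eq_bigr => c _ do under eq_bigr => p _ do rewrite orbb andbC.
  under eq_bigr => c _ do rewrite sum_if_eq_and.
  by rewrite -big_mkcond big_pred1_eq.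
have if_orb c p : (if ((c == u) && (p == w)) || ((c == w) && (p == u))
                   then V 0 c * attA Q K p b else 0) =
  (if (p == w) && (c == u) then V 0 c * attA Q K p b else 0) +
  (if (p == u) && (c == w) then V 0 c * attA Q K p b else 0).
  by move: uw; repeat (case: eqP => [?|?]; try subst); rewrite /= ?addr0 ?add0r.
under eq_bigr => c _ do under eq_bigr => p _ do rewrite if_orb.
under eq_bigr => c _ do rewrite big_split !sum_if_eq_and.
by rewrite big_split -!big_mkcond !big_pred1_eq.
Qed.

Definition only_fixed_cycles {r} (f : 'I_r -> 'I_r) :=
  forall (p : 'I_r) (m : nat), (0 < m)%N -> iter m f p = p -> f p = p.

Lemma perm_on_graph_eq1 r (f : 'I_r -> 'I_r) (s : 'S_r) : only_fixed_cycles f ->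
  (forall p, (s p == p) || (s p == f p)) -> s = 1%g.
Proof.
move=> f_acyc s_f; apply/permP => p; rewrite perm1; apply/eqP/negPn/negP => sp.
have iter_s i : iter i s p = iter i f p.
  elim: i => [//|i IHi]; rewrite !iterS -IHi.
  have : s (iter i s p) != iter i s p.
    by rewrite -permX -permM -expgSr expgS permM (inj_eq perm_inj).
  by case/orP: (s_f (iter i s p)) => /eqP-> //; rewrite eqxx.
have fp : f p = p.
  by apply: (f_acyc p #[s]%g (order_gt0 _)); rewrite -iter_s -permX expg_order perm1.
by move: (s_f p); rewrite fp orbb (negbTE sp).
Qed.

Lemma det_graph_mx (R : comRingType) r (f : 'I_r -> 'I_r) (T : 'M[R]_r) :
  only_fixed_cycles f -> (forall p q, q != p -> q != f p -> T p q = 0) ->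
  \det T = \prod_p T p p.
Proof.
move=> f_acyc T_graph; rewrite /determinant (bigD1 1%g) //= [X in _ + X]big1 ?addr0.
  by rewrite odd_perm1 expr0 mul1r; apply: eq_bigr => p _; rewrite perm1.
move=> s s_neq1; case: (pickP [pred p | ~~ ((s p == p) || (s p == f p))]) => [p|s_f].
  by rewrite /= negb_or => /andP[sp sfp]; rewrite (bigD1 p) //= T_graph // !mul0r mulr0.
by case/eqP: s_neq1; apply: perm_on_graph_eq1 f_acyc _ => p; have /negbFE := s_f p.
Qed.

Lemma omega_sym d (u w : 'I_d) : omega u w = omega w u.
Proof. by rewrite /omega eq_sym. Qed.

Lemma yval_sym (R : fieldType) a d t (n j : 'I_t) (Q K : 'M[R]_(a, d)) V
    (u w b : 'I_d) :
  yval n j Q K V u w b = yval n j Q K V w u b.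
Proof. by rewrite /yval /mon3 omega_sym (addmC U_(Xvar u n)%MM). Qed.

Lemma ypoint_yvar (R : fieldType) a d t (n j : 'I_t) (Q K : 'M[R]_(a, d)) V
    (u w b : 'I_d) :
  ypoint n j Q K V (yvar u w b) = yval n j Q K V u w b.
Proof.
by rewrite /ypoint /yvar; case: ifP => _; rewrite !(mxvecE, mxE) // yval_sym.
Qed.

Lemma omega_yval (R : numFieldType) a d t (n j : 'I_t) (Q K : 'M[R]_(a, d)) V
    (u w b : 'I_d) : n != j ->
  (omega u w)%:R * yval n j Q K V u w b =
  if u == w then V 0 u * attA Q K u b
  else V 0 u * attA Q K w b + V 0 w * attA Q K u b.
Proof.
move=> nj; rewrite /yval mulrC divfK ?mcoeff_phiW_mon3 //.
by rewrite pnatr_eq0 /omega; case: (u == w).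
Qed.

Lemma meval_Dpoly_ypoint (R : numFieldType) a d t r (n j : 'I_t)
    (Q K : 'M[R]_(a, d)) V
    (k : 'I_r -> 'I_d) (f : 'I_r -> 'I_r) (L : 'I_r -> 'I_d) :
  n != j -> injective k -> only_fixed_cycles f ->
  (Dpoly R k f L).@[ypoint n j Q K V] =
  (\prod_p V 0 (k (f p))) * \det (\matrix_(p, q) attA Q K (k p) (L q)).
Proof.
move=> nj k_inj f_acyc.
pose T := \matrix_(p, q) (V 0 (k (f p)) *+ (q == p)
                          + V 0 (k p) *+ ((f p != p) && (q == f p))) : 'M[R]_r.
have T_graph p q : q != p -> q != f p -> T p q = 0.
  by rewrite mxE => /negbTE-> /negbTE->; rewrite andbF addr0.
have detT : \det T = \prod_p V 0 (k (f p)).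
  rewrite (det_graph_mx f_acyc T_graph); apply: eq_bigr => p _.
  by rewrite mxE eqxx (eq_sym p) andNb addr0.
rewrite /Dpoly -det_map_mx -detT -det_mulmx; congr (\det _); apply/matrixP => p q.
rewrite !mxE /= mevalZ mevalXU ypoint_yvar omega_yval // (inj_eq k_inj).
under eq_bigr => i _ do rewrite [T _ _]mxE [X in _ * X]mxE mulrDl !mulrnAl !mulrb.
rewrite big_split /= -big_mkcond big_pred1_eq.
under eq_bigr => i _ do rewrite andbC.
rewrite sum_if_eq_and; case: eqP => [->|_] /=; first by rewrite addr0.
by rewrite mulrC [X in _ + X]mulrC.
Qed.

Lemma dhomog_prod_seq (R : comRingType) N (I : Type) (s : seq I)
    (F : I -> {mpoly R[N]}) (e : I -> nat) :
  (forall i, F i \is (e i).-homog) ->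
  \prod_(i <- s) F i \is (\sum_(i <- s) e i)%N.-homog.
Proof.
move=> F_homog; elim: s => [|i s IHs]; first by rewrite !big_nil dhomog1.
by rewrite !big_cons dhomogM.
Qed.

Lemma Dpoly_homog (R : comRingType) d r (k : 'I_r -> 'I_d) f L :
  Dpoly R k f L \is r.-homog.
Proof.
rewrite /Dpoly /determinant; apply: rpred_sum => s _; rewrite mulr_sign.
set P := \prod_(i < r) _.
suff : P \is (\sum_(i < r) 1)%N.-homog.
  by rewrite sum1_card card_ord; case: (odd_perm s); rewrite ?rpredN.
by apply: dhomog_prod_seq => i; rewrite mxE dhomogZ // dhomogE msuppX /= mdeg1.
Qed.

Definition mpow (R : comRingType) r (v : 'I_r -> R) (al : {ffun 'I_r -> nat}) : R :=
  \prod_m v m ^+ al m.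

Lemma mpow_maddn (R : comRingType) r (v : 'I_r -> R) (be ga : {ffun 'I_r -> nat}) :
  mpow v (maddn be ga) = mpow v be * mpow v ga.
Proof. by rewrite /mpow -big_split; apply: eq_bigr => m _; rewrite ffunE exprD. Qed.

Lemma prod_comp_fibres (R : comRingType) r (v : 'I_r -> R) (f : 'I_r -> 'I_r)
    (al : {ffun 'I_r -> nat}) :
  (forall m, #|[pred p | f p == m]| = al m) -> \prod_p v (f p) = mpow v al.
Proof.
move=> f_fibres; rewrite (partition_big f xpredT) //=; apply: eq_bigr => m _.
rewrite -f_fibres -prodr_const; apply: eq_big => [p|p /eqP-> //].
by rewrite inE.
Qed.

Lemma mdegree_maddn r (be ga : {ffun 'I_r -> nat}) :
  mdegree (maddn be ga) = (mdegree be + mdegree ga)%N.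
Proof. by rewrite /mdegree -big_split; apply: eq_bigr => m _; rewrite ffunE. Qed.

Lemma meval_rank_one_minor (R : comRingType) N (v : 'I_N -> R)
    (x y z w : {mpoly R[N]}) (a1 a2 b1 b2 : R) :
  x.@[v] = a1 * b1 -> y.@[v] = a2 * b2 -> z.@[v] = a1 * b2 -> w.@[v] = a2 * b1 ->
  (x * y - z * w).@[v] = 0.
Proof. by move=> Ex Ey Ez Ew; rewrite mevalB !mevalM Ex Ey Ez Ew; ring. Qed.

Lemma meval_CKentry (R : numFieldType) a d t r (n j : 'I_t)
    (Q K : 'M[R]_(a, d)) V
    (k : 'I_r -> 'I_d) (fch : {ffun 'I_r -> nat} -> 'I_r -> 'I_r)
    (be ga : {ffun 'I_r -> nat}) (L : {ffun 'I_r -> 'I_d}) :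
  n != j -> injective k -> admissible_f (maddn be ga) (fch (maddn be ga)) ->
  (CKentry R k fch be ga L).@[ypoint n j Q K V] =
  mpow (fun m => V 0 (k m)) be
  * (mpow (fun m => V 0 (k m)) ga * \det (\matrix_(p, q) attA Q K (k p) (L q))).
Proof.
move=> nj k_inj [f_fibres f_acyc].
rewrite meval_Dpoly_ypoint // (prod_comp_fibres (fun m => V 0 (k m)) f_fibres).
by rewrite mpow_maddn mulrA.
Qed.

Theorem mainTheorem14 (R : realFieldType) (a d t r : nat) (j n : 'I_t)
  (k : 'I_r -> 'I_d)
  (fch : {ffun 'I_r -> nat} -> 'I_r -> 'I_r) :
  (1 < t)%N -> n != j -> (2 <= r)%N -> (r <= minn a d)%N ->
  injective k ->
  (forall al : {ffun 'I_r -> nat}, mdegree al = r -> admissible_f al (fch al)) ->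
  forall (be1 be2 ga1 ga2 : {ffun 'I_r -> nat}) (L1 L2 : {ffun 'I_r -> 'I_d}),
    mdegree be1 = 1%N -> mdegree be2 = 1%N -> be1 != be2 ->
    mdegree ga1 = r.-1 -> mdegree ga2 = r.-1 ->
    injectiveb L1 -> injectiveb L2 -> (ga1, L1) != (ga2, L2) ->
    let minor : {mpoly R[d * d * d]} :=
      CKentry R k fch be1 ga1 L1 * CKentry R k fch be2 ga2 L2
      - CKentry R k fch be1 ga2 L2 * CKentry R k fch be2 ga1 L1 in
    minor \is (2 * r)%N.-homog /\
    (forall (Q K : 'M[R]_(a, d)) (V : 'M[R]_(1, d)),
        minor.@[ypoint n j Q K V] = 0).
Proof.
move=> _ nj r_ge2 _ k_inj fch_adm be1 be2 ga1 ga2 L1 L2 be1_deg be2_deg _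
  ga1_deg ga2_deg _ _ _ minor.
split.
  by rewrite /minor mul2n -addnn; apply: rpredB; apply: dhomogM; apply: Dpoly_homog.
have deg_sum (be ga : {ffun 'I_r -> nat}) :
    mdegree be = 1%N -> mdegree ga = r.-1 -> mdegree (maddn be ga) = r.
  by move=> be_deg ga_deg; rewrite mdegree_maddn be_deg ga_deg add1n prednK // ltnW.
move=> Q K V.
have CKentry_val (be ga : {ffun 'I_r -> nat}) (L : {ffun 'I_r -> 'I_d}) :
    mdegree be = 1%N -> mdegree ga = r.-1 -> _ := fun be_deg ga_deg =>
  meval_CKentry Q K V L nj k_inj (fch_adm _ (deg_sum _ _ be_deg ga_deg)).
exact: meval_rank_one_minor
  (CKentry_val be1 ga1 L1 be1_deg ga1_deg) (CKentry_val be2 ga2 L2 be2_deg ga2_deg)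
  (CKentry_val be1 ga2 L2 be1_deg ga2_deg) (CKentry_val be2 ga1 L1 be2_deg ga1_deg).
Qed.
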